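(* Let $m=m(n)$ and $p=p(n)\in(0,1)$, let $N_E$ be the number of edges of $\mathcal G(n,m,p)$ and $\hat p=1-(1-p^2)^m$. If $\widetilde N_E=(N_E-\mathbb E[N_E])/\sqrt{\operatorname{Var}[N_E]}$ converges in distribution to a standard normal random variable as $n\to\infty$, then $n^2\hat p(1-\hat p)\to\infty$.
   Context: Random intersection graph $\mathcal G(n,m,p)$: vertices $v_1,\ldots,v_n$, attributes $a_1,\ldots,a_m$; each vertex chooses each attribute independently with probability $p$; two vertices are adjacent iff they chose at least one common attribute. *)

From HB Require Import structures.
From mathcomp Require Import all_boot all_order all_algebra.
From mathcomp Require Import all_classical all_reals all_analysis.
Set Implicit Arguments. Unset Strict Implicit. Unset Printing Implicit Defensive.
Import Order.TTheory GRing.Theory Num.Theory.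
Local Open Scope ring_scope.
Local Open Scope classical_set_scope.

Section RIG.
Variable R : realType.

(* An outcome of G(n,m,p): for each (vertex i, attribute a), whether i chose a. *)
Definition rig_outcome (n m : nat) := {ffun 'I_n * 'I_m -> bool}.

Definition rig_weight (n m : nat) (p : R) (w : rig_outcome n m) : R :=
  \prod_(k : 'I_n * 'I_m) (if w k then p else 1 - p).

Definition rig_prob (n m : nat) (p : R) (A : pred (rig_outcome n m)) : R :=
  \sum_(w | A w) rig_weight p w.

Definition rig_expect (n m : nat) (p : R) (X : rig_outcome n m -> R) : R :=
  \sum_w rig_weight p w * X w.

Definition rig_var (n m : nat) (p : R) (X : rig_outcome n m -> R) : R :=
  rig_expect p (fun w => (X w - rig_expect p X) ^+ 2).

Definition rig_adj (n m : nat) (w : rig_outcome n m) (i j : 'I_n) : bool :=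
  [exists a : 'I_m, w (i, a) && w (j, a)].

Definition rig_NE (n m : nat) (w : rig_outcome n m) : R :=
  (#|[set ij : 'I_n * 'I_n | (ij.1 < ij.2)%N && rig_adj w ij.1 ij.2]|)%:R.

(* Standardized number of edges (convention x/0 = 0 if Var = 0). *)
Definition rig_NE_std (n m : nat) (p : R) (w : rig_outcome n m) : R :=
  (rig_NE w - rig_expect p (@rig_NE n m)) / Num.sqrt (rig_var p (@rig_NE n m)).

Definition std_normal_cdf (x : R) : R := fine (normal_prob 0 1 [set t : R | t <= x]).

Definition p_hat (m : nat) (p : R) : R := 1 - (1 - p ^+ 2) ^+ m.

End RIG.

From HB Require Import structures.
From mathcomp Require Import all_boot all_order all_algebra.
From mathcomp Require Import all_classical all_reals all_analysis.
From mathcomp Require Import ring lra measurable_realfun.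
Set Implicit Arguments. Unset Strict Implicit. Unset Printing Implicit Defensive.
Import Order.TTheory GRing.Theory Num.Theory numFieldNormedType.Exports.
Local Open Scope classical_set_scope.
Local Open Scope ring_scope.

(* If n^2 p_hat (1 - p_hat) stayed below C for infinitely many n, then, as
   min(p_hat, 1 - p_hat) <= 2 p_hat (1 - p_hat), either the number of edges or
   the number of non-edges would have mean at most 2 C.  By Markov's inequality
   and pigeonhole that integer-valued count, hence N_E and its standardization,
   would have an atom of mass at least 1/(2M) for a fixed M > 4 C.  But
   distribution functions converging pointwise to the uniformly continuous
   normal distribution function eventually have only small atoms. *)

Lemma sum_ord_eqn (k M : nat) : (\sum_(j < M) (k == j) = (k < M))%N.
Proof.
rewrite -[(k < M)%N]/(0 <= k < 0 + M)%N -mem_iota -count_uniq_mem ?iota_uniq //.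
rewrite -sum1_count -(big_mkord xpredT (fun j => (k == j : nat))) /index_iota subn0.
by rewrite [RHS]big_mkcond; apply: eq_bigr => j _; rewrite /= eq_sym; case: (j == k).
Qed.

(* [set i | b i] is a classical set here, as in rig_NE: #|_| sees it through in_set. *)
Lemma natr_card_set (R : pzSemiRingType) (I : finType) (b : pred I) :
  (#|[set i | b i]|%:R : R) = \sum_i (b i)%:R.
Proof.
rewrite -sum1_card natr_sum big_mkcond /=; apply: eq_bigr => i _.
by rewrite /in_mem /= /in_set asboolb; case: (b i).
Qed.

Lemma exists_ge_mean (R : realFieldType) (M : nat) (a : 'I_M -> R) : (0 < M)%N ->
  exists j, (\sum_i a i) / M%:R <= a j.
Proof.
move=> M_gt0; apply/not_existsP => /= small.
have : \sum_i a i < \sum_(i < M) (\sum_i a i) / M%:R.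
  apply: ltr_sum; first by apply/hasP; exists (Ordinal M_gt0); rewrite ?mem_index_enum.
  by move=> i _; rewrite ltNge; apply/negP/small.
by rewrite sumr_const card_ord -[_ *+ M]mulr_natr divfK ?ltxx // pnatr_eq0 -lt0n.
Qed.

Section FiniteProbability.
Variables (R : realFieldType) (T : finType) (P : T -> R).
Hypotheses (P_ge0 : forall t, 0 <= P t) (P_sum1 : \sum_t P t = 1).

Definition dprob (A : pred T) : R := \sum_(t | A t) P t.

Definition dexpect (X : T -> R) : R := \sum_t P t * X t.

Lemma dprobE (A : pred T) : dprob A = dexpect (fun t => (A t)%:R).
Proof.
rewrite /dprob /dexpect big_mkcond; apply: eq_bigr => t _.
by case: (A t); rewrite ?mulr1 ?mulr0.
Qed.

Lemma ler_dexpect (X Y : T -> R) : (forall t, X t <= Y t) -> dexpect X <= dexpect Y.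
Proof. by move=> XY; apply: ler_sum => t _; rewrite ler_wpM2l. Qed.

Lemma dexpectD (X Y : T -> R) : dexpect (fun t => X t + Y t) = dexpect X + dexpect Y.
Proof. by rewrite /dexpect -big_split; apply: eq_bigr => t _; rewrite mulrDr. Qed.

Lemma dprob_ge0 (A : pred T) : 0 <= dprob A.
Proof. exact: sumr_ge0. Qed.

Lemma le_dprob (A B : pred T) : (forall t, A t -> B t) -> dprob A <= dprob B.
Proof.
move=> AB; rewrite !dprobE; apply: ler_dexpect => t.
by rewrite ler_nat; case: (A t) (AB t) => // ->.
Qed.

Lemma dprob_le1 (A : pred T) : dprob A <= 1.
Proof. by rewrite /dprob -P_sum1 [leLHS]big_mkcond ler_sum // => t _; case: (A t). Qed.

Lemma dprobC (A : pred T) : dprob (predC A) = 1 - dprob A.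
Proof. by rewrite /dprob -P_sum1 (bigID A predT) /= addrC addrK. Qed.

Lemma dprob_eq_add_le (X : T -> R) (x y z : R) : x < y <= z ->
  dprob (fun t => X t == y) + dprob (fun t => X t <= x) <= dprob (fun t => X t <= z).
Proof.
move=> /andP[xy yz]; rewrite !dprobE -dexpectD; apply: ler_dexpect => t.
have [-> | _] := eqVneq (X t) y; first by rewrite (leNgt y x) xy yz /= addr0.
by rewrite /= add0r ler_nat; case: leP => // /le_trans/(_ (le_trans (ltW xy) yz)) ->.
Qed.

Lemma dexpect_sum (I : finType) (X : I -> T -> R) :
  dexpect (fun t => \sum_i X i t) = \sum_i dexpect (X i).
Proof.
rewrite /dexpect exchange_big; apply: eq_bigr => t _; exact: mulr_sumr.
Qed.

Lemma dexpect_card (I : finType) (E : I -> pred T) :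
  dexpect (fun t => #|[set i | E i t]|%:R) = \sum_i dprob (E i).
Proof.
under eq_fun do rewrite natr_card_set.
by rewrite dexpect_sum; apply: eq_bigr => i _; rewrite dprobE.
Qed.

Lemma markov_nat (Y : T -> nat) (M : nat) :
  M%:R * dprob (fun t => M <= Y t)%N <= dexpect (fun t => (Y t)%:R).
Proof.
rewrite dprobE /dexpect mulr_sumr; apply: ler_sum => t _.
by rewrite mulrCA ler_wpM2l //; case: leqP => /= h; rewrite ?mulr1 ?mulr0 ?ler_nat.
Qed.

Lemma dprob_ltn_partition (Y : T -> nat) (M : nat) :
  dprob (fun t => Y t < M)%N = \sum_(j < M) dprob (fun t => Y t == j).
Proof.
under eq_bigr do rewrite dprobE.
rewrite dprobE -dexpect_sum; congr dexpect; apply/funext => t.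
by rewrite -natr_sum sum_ord_eqn.
Qed.

Lemma exists_atom_of_dexpect_le (Y : T -> nat) (M : nat) : (0 < M)%N ->
  dexpect (fun t => (Y t)%:R) <= M%:R / 2 ->
  exists j : 'I_M, (2 * M%:R)^-1 <= dprob (fun t => Y t == j).
Proof.
move=> M_gt0 EY; have M_gt0' : 0 < M%:R :> R by rewrite ltr0n.
have tail : dprob (fun t => M <= Y t)%N <= 2^-1.
  rewrite -(ler_pM2l M_gt0'); apply: le_trans (markov_nat Y M) _; lra.
have head : 2^-1 <= \sum_(j < M) dprob (fun t => Y t == j).
  rewrite -dprob_ltn_partition.
  have -> : dprob (fun t => Y t < M)%N = dprob (predC (fun t => M <= Y t)%N).
    by apply: eq_bigl => t; rewrite /= ltnNge.
  rewrite dprobC; lra.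
have [j hj] := exists_ge_mean (fun j => dprob (fun t => Y t == j)) M_gt0.
exists j; apply: le_trans hj; rewrite invfM ler_pM2r ?invr_gt0 //.
Qed.

End FiniteProbability.

Lemma prod_two_rows (R : comPzSemiRingType) (n m : nat) (i j : 'I_n)
    (G1 G2 : 'I_n * 'I_m -> R) : i != j ->
  \prod_(k : 'I_n * 'I_m) (if k.1 == i then G1 k else if k.1 == j then G2 k else 1)
  = \prod_a (G1 (i, a) * G2 (j, a)).
Proof.
move=> ij; transitivity (\prod_v \prod_a
    (if v == i then G1 (v, a) else if v == j then G2 (v, a) else 1)).
  by rewrite pair_bigA; apply: eq_bigr => -[v a].
rewrite exchange_big /=; apply: eq_bigr => a _.
rewrite (bigD1 i) //= eqxx (bigD1 j) 1?eq_sym //= (negbTE ij) eqxx.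
by rewrite big1 ?mulr1 // => v /andP[/negbTE -> /negbTE ->].
Qed.

Lemma prodr_1B_expand (R : comPzRingType) (I : finType) (X : I -> R) :
  \prod_i (1 - X i) = \sum_(S : {ffun I -> bool}) \prod_i (if S i then - X i else 1).
Proof.
transitivity (\prod_i \sum_(b : bool) (if b then - X i else 1)).
  by apply: eq_bigr => i _; rewrite big_bool addrC.
exact: bigA_distr_bigA.
Qed.

Section RandomIntersectionGraph.
Variables (R : realType) (n m : nat) (p : R).
Hypothesis p01 : 0 <= p <= 1.

Local Notation outcome := (rig_outcome n m).
Local Notation Pr := (dprob (@rig_weight R n m p)).
Local Notation E := (dexpect (@rig_weight R n m p)).

Lemma rig_weight_ge0 (w : outcome) : 0 <= rig_weight p w.
Proof.
have /andP[p0 p1] := p01.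
by apply: prodr_ge0 => k _; case: (w k); rewrite // subr_ge0.
Qed.

Lemma rig_dexpect_prod (h : 'I_n * 'I_m -> bool -> R) :
  E (fun w => \prod_k h k (w k)) = \prod_k (p * h k true + (1 - p) * h k false).
Proof.
transitivity (\prod_k \sum_(b : bool) (if b then p else 1 - p) * h k b); last first.
  by apply: eq_bigr => k _; rewrite big_bool.
rewrite bigA_distr_bigA /=; apply: eq_bigr => w _.
by rewrite /rig_weight -big_split.
Qed.

Lemma rig_weight_sum1 : \sum_(w : outcome) rig_weight p w = 1.
Proof.
transitivity (E (fun w => \prod_(k : 'I_n * 'I_m) 1)).
  by apply: eq_bigr => w _; rewrite big1_eq mulr1.
by rewrite (rig_dexpect_prod (fun _ _ => 1)) big1 // => k _; rewrite !mulr1 addrC subrK.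
Qed.

Lemma rig_dexpect_two_rows (i j : 'I_n) (f g : 'I_m -> bool -> R) : i != j ->
  E (fun w => \prod_a (f a (w (i, a)) * g a (w (j, a)))) =
  \prod_a ((p * f a true + (1 - p) * f a false) * (p * g a true + (1 - p) * g a false)).
Proof.
move=> ij; pose h k b := if k.1 == i then f k.2 b else if k.1 == j then g k.2 b else 1.
transitivity (E (fun w => \prod_k h k (w k))).
  by congr dexpect; apply/funext => w; rewrite (prod_two_rows (fun k => f k.2 (w k))).
rewrite rig_dexpect_prod -(prod_two_rows (fun k => p * f k.2 true + (1 - p) * f k.2 false)
  (fun k => p * g k.2 true + (1 - p) * g k.2 false) ij).
apply: eq_bigr => k _; rewrite /h.
by case: (k.1 == i); case: (k.1 == j); rewrite /= ?mulr1 ?(addrC p) ?subrK.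
Qed.

Lemma rig_notadjE (w : outcome) (i j : 'I_n) :
  (~~ rig_adj w i j)%:R = \prod_a (1 - (w (i, a))%:R * (w (j, a))%:R) :> R.
Proof.
rewrite /rig_adj; case: existsP => [[a /andP[wi wj]] | none] /=.
  by rewrite (bigD1 a) //= wi wj mulr1 subrr mul0r.
rewrite big1 // => a _; have : ~~ (w (i, a) && w (j, a)) by apply/negP => ?; apply: none; exists a.
by case: (w (i, a)); case: (w (j, a)); rewrite //= ?mul0r ?mulr0 subr0.
Qed.

Lemma rig_prob_notadj (i j : 'I_n) : i != j ->
  Pr (fun w => ~~ rig_adj w i j) = (1 - p ^+ 2) ^+ m.
Proof.
(* After expansion every term is a product of functions of single coordinates
   of rows i and j, to which independence applies. *)
move=> ij; rewrite dprobE.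
under eq_fun do rewrite rig_notadjE prodr_1B_expand.
have -> : (1 - p ^+ 2) ^+ m = \prod_(a < m) (1 - p ^+ 2) by rewrite prodr_const card_ord.
rewrite dexpect_sum prodr_1B_expand; apply: eq_bigr => S _.
pose f a (b : bool) : R := if S a then - b%:R else 1.
pose g a (b : bool) : R := if S a then b%:R else 1.
transitivity (E (fun w => \prod_a (f a (w (i, a)) * g a (w (j, a))))).
  congr dexpect; apply/funext => w; apply: eq_bigr => a _.
  by rewrite /f /g; case: (S a); rewrite ?mulr1 ?mulNr.
rewrite rig_dexpect_two_rows //; apply: eq_bigr => a _.
by rewrite /f /g; case: (S a) => /=; ring.
Qed.

Lemma rig_prob_adj (i j : 'I_n) : i != j -> Pr (fun w => rig_adj w i j) = p_hat m p.
Proof.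
move=> ij; have := dprobC rig_weight_sum1 (fun w => rig_adj w i j).
by rewrite /p_hat -(rig_prob_notadj ij) => ->; rewrite opprB addrC subrK.
Qed.

Lemma p_hat_ge0 : 0 <= p_hat m p.
Proof.
have /andP[p0 p1] := p01.
by rewrite subr_ge0 exprn_ile1 // ?subr_ge0 ?exprn_ile1 // lerBlDr lerDl sqr_ge0.
Qed.

Lemma p_hat_le1 : p_hat m p <= 1.
Proof.
have /andP[p0 p1] := p01.
by rewrite lerBlDr lerDl exprn_ge0 // subr_ge0 exprn_ile1.
Qed.

Definition count_pairs (Q : 'I_n -> 'I_n -> bool) : nat :=
  #|[set ij : 'I_n * 'I_n | (ij.1 < ij.2)%N && Q ij.1 ij.2]|.

Lemma count_pairsC (Q : 'I_n -> 'I_n -> bool) :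
  (count_pairs Q)%:R + (count_pairs (fun i j => ~~ Q i j))%:R =
  (count_pairs (fun _ _ => true))%:R :> R.
Proof.
rewrite /count_pairs !natr_card_set -big_split; apply: eq_bigr => ij _ /=.
by case: (_ < _)%N; case: (Q _ _); rewrite /= ?addr0 ?add0r.
Qed.

Lemma dexpect_count_pairs_le (Q : outcome -> 'I_n -> 'I_n -> bool) (q : R) : 0 <= q ->
  (forall i j : 'I_n, (i < j)%N -> Pr (fun w => Q w i j) <= q) ->
  E (fun w => (count_pairs (Q w))%:R) <= n%:R ^+ 2 * q.
Proof.
move=> q_ge0 Qq.
rewrite (dexpect_card _ (fun (ij : 'I_n * 'I_n) w => (ij.1 < ij.2)%N && Q w ij.1 ij.2)).
apply: le_trans (_ : \sum_(ij : 'I_n * 'I_n) q <= _).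
  apply: ler_sum => -[i j] _ /=; case: ltnP => ij; first exact: Qq.
  by rewrite /dprob big_pred0.
by rewrite sumr_const card_prod card_ord -[leLHS]mulr_natl natrM expr2.
Qed.

Lemma exists_count_pairs_atom (Q : outcome -> 'I_n -> 'I_n -> bool) (q : R) (M : nat) :
  (0 < M)%N -> 0 <= q -> (forall i j : 'I_n, (i < j)%N -> Pr (fun w => Q w i j) <= q) ->
  2 * (n%:R ^+ 2 * q) <= M%:R ->
  exists k : nat, (2 * M%:R)^-1 <= Pr (fun w => count_pairs (Q w) == k).
Proof.
move=> M_gt0 q_ge0 Qq small.
have mean_le : E (fun w => (count_pairs (Q w))%:R) <= M%:R / 2.
  by apply: le_trans (dexpect_count_pairs_le q_ge0 Qq) _; lra.
have [k atom] := exists_atom_of_dexpect_le rig_weight_ge0 rig_weight_sum1 M_gt0 mean_le.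
by exists k.
Qed.

Lemma exists_rig_NE_atom (M : nat) : (0 < M)%N ->
  4 * (n%:R ^+ 2 * p_hat m p * (1 - p_hat m p)) <= M%:R ->
  exists y : R, (2 * M%:R)^-1 <= Pr (fun w => rig_NE R w == y).
Proof.
move=> M_gt0 small; have ph0 := p_hat_ge0; have ph1 := p_hat_le1.
have n2_ge0 : 0 <= n%:R ^+ 2 :> R by rewrite exprn_ge0.
have ph1' : 0 <= 1 - p_hat m p by rewrite subr_ge0.
have adj_le (i j : 'I_n) : (i < j)%N -> Pr (fun w => rig_adj w i j) <= p_hat m p.
  by move=> ij; rewrite rig_prob_adj //; exact: negbT (ltn_eqF ij).
have nonadj_le (i j : 'I_n) : (i < j)%N -> Pr (fun w => ~~ rig_adj w i j) <= 1 - p_hat m p.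
  by move=> ij; rewrite rig_prob_notadj ?(negbT (ltn_eqF ij)) // /p_hat; lra.
have [ph_small | ph_large] := lerP (p_hat m p) 2^-1.
  have [|k atom] := exists_count_pairs_atom M_gt0 ph0 adj_le.
    by have := mulr_ge0 n2_ge0 ph0; nra.
  by exists k%:R; apply: le_trans atom (le_dprob rig_weight_ge0 _) => w /eqP <-.
have [|k atom] := exists_count_pairs_atom M_gt0 ph1' nonadj_le.
  by have := mulr_ge0 n2_ge0 ph1'; nra.
exists ((count_pairs (fun _ _ => true))%:R - k%:R).
apply: le_trans atom (le_dprob rig_weight_ge0 _) => w /eqP <-.
by rewrite -(count_pairsC (rig_adj w)) addrK.
Qed.

Lemma exists_rig_NE_std_atom (M : nat) : (0 < M)%N ->
  4 * (n%:R ^+ 2 * p_hat m p * (1 - p_hat m p)) <= M%:R ->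
  exists y : R, (2 * M%:R)^-1 <= Pr (fun w => rig_NE_std p w == y).
Proof.
move=> M_gt0 small; have [y atom] := exists_rig_NE_atom M_gt0 small.
exists ((y - rig_expect p (@rig_NE R n m)) / Num.sqrt (rig_var p (@rig_NE R n m))).
by apply: le_trans atom (le_dprob rig_weight_ge0 _) => w /eqP NEy; rewrite /rig_NE_std NEy.
Qed.

End RandomIntersectionGraph.

Section StdNormalCdf.
Variable R : realType.
Local Notation nu := (normal_prob (0:R) 1).

Let idTR : measurableTypeR R -> R := idfun.

#[local] HB.instance Definition _ :=
  @isMeasurableFun.Build _ _ _ _ idTR (@measurable_id _ _ setT).

Lemma std_normal_cdfE (x : R) :
  std_normal_cdf x = fine (cdf (idTR : {RV nu >-> R}) x).
Proof. by rewrite /std_normal_cdf -set_itvNyc. Qed.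

Lemma cvg_std_normal_cdfNy0 : @std_normal_cdf R @ -oo --> 0.
Proof.
rewrite (_ : @std_normal_cdf R = fine \o cdf (idTR : {RV nu >-> R})).
  exact/fine_cvg/cvg_cdfNy0.
by apply/funext => x; rewrite std_normal_cdfE.
Qed.

Lemma cvg_std_normal_cdfy1 : @std_normal_cdf R @ +oo%R --> (1 : R).
Proof.
rewrite (_ : @std_normal_cdf R = fine \o cdf (idTR : {RV nu >-> R})).
  exact/fine_cvg/cvg_cdfy1.
by apply/funext => x; rewrite std_normal_cdfE.
Qed.

Lemma std_normal_cdfB (a b : R) : a <= b ->
  std_normal_cdf b - std_normal_cdf a = fine (nu `]a, b]).
Proof.
move=> ab; have split_b : `]-oo, b]%classic = `]-oo, a] `|` `]a, b] :> set R.
  apply/seteqP; split => t /=; rewrite !in_itv /=.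
    by case: (leP t a) => ta tb; [left | right; apply/andP].
  by case=> [ta | /andP[_ //]]; exact: le_trans ab.
have disj : `]-oo, a]%classic `&` `]a, b] = set0 :> set R.
  by apply/seteqP; split => t //=; rewrite !in_itv /= => -[+ /andP[+ _]]; lra.
rewrite /std_normal_cdf -!set_itvNyc split_b measureU //.
by rewrite fineD ?fin_num_measure // addrC addKr.
Qed.

Lemma normal_peak1_le1 : normal_peak (1 : R) <= 1.
Proof.
have pi2 := pi_ge2 R.
have one_le : 1 <= Num.sqrt (pi *+ 2 : R) by rewrite -sqrtr1 ler_sqrt -mulr_natr; lra.
by rewrite /normal_peak expr1n mul1r invf_le1 // (lt_le_trans ltr01 one_le).
Qed.

Lemma std_normal_cdf_lipschitz (a b : R) : a <= b ->
  std_normal_cdf b - std_normal_cdf a <= b - a.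
Proof.
move=> ab; rewrite std_normal_cdfB // -lee_fin fineK ?fin_num_measure //.
apply: (@le_trans _ _ (\int[lebesgue_measure]_(x in `]a, b]) (normal_peak (1:R))%:E)%E).
  apply: ge0_le_integral => //=.
  - by move=> x _; rewrite lee_fin normal_pdf_ge0.
  - apply/measurable_EFinP; apply: measurable_funTS; exact: measurable_normal_pdf.
  - by move=> x _; rewrite lee_fin normal_pdf_ub // oner_neq0.
rewrite integral_cst //= lebesgue_measure_itv /= lte_fin.
case: ltP => [_ | ba]; last by rewrite mule0 lee_fin subr_ge0.
rewrite -EFinD -EFinM lee_fin ler_piMl ?subr_ge0 //; exact: normal_peak1_le1.
Qed.

Lemma std_normal_cdf_unif (e : R) : 0 < e ->
  exists2 h, 0 < h & forall a b, a <= b <= a + h -> std_normal_cdf b - std_normal_cdf a <= e.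
Proof.
move=> e_gt0; exists e => // a b /andP[ab ba].
by apply: le_trans (std_normal_cdf_lipschitz ab) _; rewrite lerBlDl.
Qed.

End StdNormalCdf.

Lemma exists_itv_step (R : realDomainType) (x : nat -> R) (y : R) (K : nat) :
  x 0%N < y -> y <= x K -> exists2 i, (i < K)%N & x i < y <= x i.+1.
Proof.
move=> x0y; elim: K => [|K IH] yxK; first by rewrite ltNge yxK in x0y.
have [yxK' | xKy] := leP y (x K); last by exists K => //; rewrite xKy.
by have [i iK ?] := IH yxK'; exists i => //; exact: ltnW.
Qed.

Section CdfAtoms.
Variable R : realType.

Lemma atom_lt_of_grid (G Fn An : R -> R) (x : nat -> R) (K : nat) (e : R) :
  (forall t, 0 <= Fn t) -> (forall t, Fn t <= 1) ->
  (forall s t u, s < t <= u -> An t + Fn s <= Fn u) ->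
  (forall i, (i <= K)%N -> `|G (x i) - Fn (x i)| < e) ->
  G (x 0%N) < e -> 1 - e < G (x K) ->
  (forall i, (i < K)%N -> G (x i.+1) - G (x i) <= e) ->
  forall y, An y < 3 * e.
Proof.
move=> F_ge0 F_le1 AF_le close G0 GK Ginc y.
have Fclose i : (i <= K)%N -> G (x i) - e < Fn (x i) < G (x i) + e.
  by move=> iK; have := close i iK; rewrite ltr_norml => /andP[? ?]; apply/andP; lra.
have e_gt0 : 0 < e := le_lt_trans (normr_ge0 _) (close 0%N isT).
have [y_le | x0_lt] := leP y (x 0%N).
  have := AF_le (y - 1) y (x 0%N); rewrite y_le ltrBlDr ltrDl ltr01 => /(_ isT).
  have := F_ge0 (y - 1); have /andP[_ +] := Fclose 0%N isT; lra.
have [xK_lt | y_le] := ltP (x K) y.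
  have := AF_le (x K) y y; rewrite xK_lt lexx => /(_ isT).
  have := F_le1 y; have /andP[+ _] := Fclose K (leqnn K); lra.
have [i iK /andP[xi_lt y_le']] := exists_itv_step x0_lt y_le.
have := AF_le _ _ _ (introT andP (conj xi_lt y_le')).
have /andP[+ _] := Fclose i (ltnW iK); have /andP[_ +] := Fclose i.+1 iK.
have := Ginc i iK; lra.
Qed.

Lemma cvg_cdf_atoms_small (G : R -> R) (F A : nat -> R -> R) :
  G @ -oo --> (0 : R) -> G @ +oo%R --> (1 : R) ->
  (forall e, 0 < e -> exists2 h, 0 < h & forall a b, a <= b <= a + h -> G b - G a <= e) ->
  (forall n t, 0 <= F n t) -> (forall n t, F n t <= 1) ->
  (forall n s t u, s < t <= u -> A n t + F n s <= F n u) ->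
  (forall t, F n t @[n --> \oo] --> G t) ->
  forall d, 0 < d -> \forall n \near \oo, forall y, A n y < d.
Proof.
move=> G_Ny0 G_y1 G_unif F_ge0 F_le1 AF_le F_cvg d d_gt0.
pose e := d / 3; have e_gt0 : 0 < e by rewrite divr_gt0.
have [h h_gt0 Ginc] := G_unif e e_gt0.
have G_small : \forall t \near -oo%R, G t < e.
  apply: filterS (@cvgr_dist_lt _ _ _ _ _ _ _ G_Ny0 _ e_gt0) => t.
  by rewrite sub0r normrN; exact: le_lt_trans (ler_norm _).
have [a0 [_ Ga0]] := G_small.
pose a := a0 - 1; have Ga : G a < e by apply: Ga0; rewrite /a ltrBlDr ltrDl.
have [M [_ GM]] : \forall t \near +oo%R, 1 - e < G t.
  by apply: filterS (@cvgr_dist_lt _ _ _ _ _ _ _ G_y1 _ e_gt0) => t; rewrite ltr_norml; lra.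
pose x i := a + i%:R * h.
pose K := (Num.truncn ((M - a) / h)).+1.
have xK : M < x K.
  by rewrite /x -ltrBlDl -ltr_pdivrMr // truncnS_gt.
have close : \forall n \near \oo, forall i : 'I_K.+1, `|G (x i) - F n (x i)| < e.
  by apply: filter_forall => i; exact: @cvgr_dist_lt _ _ _ _ _ _ _ (F_cvg _) _ e_gt0.
near=> n => y.
have close_n : forall i : 'I_K.+1, `|G (x i) - F n (x i)| < e by near: n.
rewrite (_ : d = 3 * e); last by rewrite /e; field.
apply: (atom_lt_of_grid (K := K) (F_ge0 n) (F_le1 n) (AF_le n)) => //.
- by move=> i iK; exact: (close_n (Ordinal (iK : i < K.+1)%N)).
- by rewrite /x mul0r addr0.
- exact: GM.
- move=> i _; apply: Ginc; rewrite /x -addn1 natrD mulrDl mul1r addrA lerDl ltW //=.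
Unshelve. all: end_near.
Qed.

End CdfAtoms.

Theorem lemma7p6 (R : realType) (m : nat -> nat) (p : nat -> R)
  (hp : forall n, 0 < p n < 1)
  (hclt : forall x : R,
     (fun n : nat => rig_prob (p n)
        (fun w : rig_outcome n (m n) => rig_NE_std (p n) w <= x) : R)
     @ \oo --> std_normal_cdf x) :
  (fun n : nat => (n%:R ^+ 2 * p_hat (m n) (p n) * (1 - p_hat (m n) (p n)) : R))
    @ \oo --> +oo%R.
Proof.
apply/cvgryPge => C.
have p01 n : 0 <= p n <= 1 by have /andP[p0 p1] := hp n; rewrite !ltW.
pose M := (Num.truncn (4 * `|C|)).+1.
have d_gt0 : 0 < (2 * M%:R)^-1 :> R by rewrite invr_gt0 mulr_gt0 ?ltr0n.
have small_atoms := cvg_cdf_atoms_small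
  (A := fun n y => rig_prob (p n) (fun w : rig_outcome n (m n) => rig_NE_std (p n) w == y))
  (@cvg_std_normal_cdfNy0 R) (@cvg_std_normal_cdfy1 R) (@std_normal_cdf_unif R)
  (fun n _ => dprob_ge0 (rig_weight_ge0 (p01 n)) _)
  (fun n _ => dprob_le1 (rig_weight_ge0 (p01 n)) (rig_weight_sum1 _ _ _) _)
  (fun n => dprob_eq_add_le (rig_weight_ge0 (p01 n)) _) hclt d_gt0.
apply: filterS small_atoms => n no_atom; rewrite leNgt; apply/negP => small.
have [|y atom] := exists_rig_NE_std_atom (n := n) (m := m n) (M := M) (p01 n) isT.
  apply: le_trans (ltW (truncnS_gt _)); rewrite ler_pM2l //.
  exact: le_trans (ltW small) (ler_norm C).
by have := no_atom y; rewrite ltNge atom.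
Qed.
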